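(* Let $\Sigma$ and $\Gamma$ be finite alphabets, each with at least two letters, and let $a,b \in \Sigma$ be distinct letters. For every integer $n \ge 2$, $\mathrm{E}_{\mathcal{I}}((ab)^n ba) = 1 + \frac{2}{n-1}$.
   Context: For a nonempty word $v$ and integer $p\ge 0$, $v^{p/|v|}$ denotes the prefix of length $p$ of $vvv\cdots$. For a nonempty finite word $u$, $\mathrm{E}(u) = \sup\{ r \in \mathbb{Q} : u = v^r \text{ for some nonempty word } v\}$. $\mathcal{I}$ is the set of injective morphisms $\Sigma^* \to \Gamma^*$, and for $w\in\Sigma^+$, $\mathrm{E}_{\mathcal{I}}(w) = \sup\{\mathrm{E}(h(w)) : h \in \mathcal{I}\}$. *)

From HB Require Import structures.
From mathcomp Require Import all_boot all_order all_algebra.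
From mathcomp Require Import boolp classical_sets reals.
Set Implicit Arguments. Unset Strict Implicit. Unset Printing Implicit Defensive.
Import Order.TTheory GRing.Theory Num.Theory.
Local Open Scope classical_set_scope.
Local Open Scope ring_scope.

(* v^{p/|v|} : the prefix of length p of v v v ... (p copies suffice when v <> []) *)
Definition fpow (T : Type) (v : seq T) (p : nat) : seq T :=
  take p (flatten (nseq p v)).

Definition is_frac_power (T : Type) (u v : seq T) (r : rat) : Prop :=
  v <> [::] /\ exists p : nat, r = (p%:R / (size v)%:R)%R /\ u = fpow v p.

Definition expo (R : realType) (T : Type) (u : seq T) : R :=
  sup [set x : R | exists v r, is_frac_power u v r /\ x = ratr r].

Definition is_morphism (S G : Type) (h : seq S -> seq G) : Prop :=
  forall u v, h (u ++ v) = h u ++ h v.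

Definition expo_inj (R : realType) (S G : Type) (w : seq S) : R :=
  sup [set x : R | exists h : seq S -> seq G,
         is_morphism h /\ injective h /\ x = expo R (h w)].

From HB Require Import structures.
From mathcomp Require Import all_boot all_order all_algebra.
From mathcomp Require Import boolp classical_sets reals.
From mathcomp Require Import zify ring.
Import Order.TTheory GRing.Theory Num.Theory.
Set Implicit Arguments. Unset Strict Implicit. Unset Printing Implicit Defensive.

(* E(u) is |u| divided by the least period of u.  Write x = h(a), y = h(b) for an
   injective morphism h, so that h((ab)^n ba) = (xy)^n yx.  By Fine and Wilf, a
   period q < (n-1)|xy| of this word, together with the period |xy| of (xy)^n,
   would force yx = xy, i.e. h(ab) = h(ba); hence the exponent is at most
   (n+1)|xy| / ((n-1)|xy|) = 1 + 2/(n-1).  Conversely x = c(dc)^k and y = dc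
   satisfy xy = (cd)x, which gives (xy)^n yx the period (n-1)|xy| + 2, so its
   exponent (n+1)(2k+3) / ((n-1)(2k+3) + 2) tends to 1 + 2/(n-1).  Coding the
   other letters by d d c^i d keeps the code prefix-free, hence h injective. *)

Section Periods.
Variables (T : eqType) (x0 : T).
Implicit Types (u v w z t : seq T).

Definition has_period w p := forall i, i + p < size w -> nth x0 w i = nth x0 w (i + p).

Lemma has_period_catl w t p : has_period (w ++ t) p -> has_period w p.
Proof.
move=> per_wt i lt_ip.
have nth_w j : j < size w -> nth x0 w j = nth x0 (w ++ t) j by rewrite nth_cat => ->.
rewrite nth_w ?(nth_w (i + p)) //; last lia.
by apply: per_wt; rewrite size_cat; lia.
Qed.

Lemma nth_period_mod w p i : has_period w p -> i < size w -> nth x0 w (i %% p) = nth x0 w i.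
Proof.
case: (posnP p) => [-> _ _ | p_gt0 per_w]; first by rewrite modn0.
elim/ltn_ind: i => i IH lt_iw.
have [lt_ip | le_pi] := ltnP i p; first by rewrite modn_small.
by rewrite -(subnK le_pi) modnDr -per_w ?subnK // IH //; lia.
Qed.

Lemma has_period_mod w p i j : has_period w p -> i < size w -> j < size w ->
  i = j %[mod p] -> nth x0 w i = nth x0 w j.
Proof.
by move=> per_w lt_i lt_j eq_ij; rewrite -(nth_period_mod per_w lt_i) eq_ij nth_period_mod.
Qed.

Lemma has_period_sub w p q : p < q -> p + q <= size w ->
  has_period w p -> has_period w q -> has_period w (q - p).
Proof.
move=> lt_pq le_w per_p per_q i lt_i.
have [le_pi | lt_ip] := leqP p i.
  rewrite -{1}(subnK le_pi) -per_p; last lia.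
  have -> : i + (q - p) = i - p + q by lia.
  by apply: per_q; lia.
rewrite (per_q i) ?(per_p (i + (q - p))); try congr nth; lia.
Qed.

(* Fine and Wilf, in the weak form with p + q instead of p + q - gcd p q. *)
Lemma has_period_gcd w p q : 0 < p -> 0 < q -> p + q <= size w ->
  has_period w p -> has_period w q -> has_period w (gcdn p q).
Proof.
have [m] := ubnP (p + q); elim: m p q => // m IH p q /ltnSE le_m.
move=> p_gt0 q_gt0 le_w per_p per_q.
have [lt_pq | lt_qp | ->] := ltngtP p q; last by rewrite gcdnn.
- rewrite -(subnK (ltnW lt_pq)) gcdnDr.
  by apply: IH; rewrite ?subn_gt0 //; [lia | lia | exact: has_period_sub].
- rewrite gcdnC -(subnK (ltnW lt_qp)) gcdnDr.
  by apply: IH; rewrite ?subn_gt0 //; [lia | lia | apply: has_period_sub => //; lia].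
Qed.

Lemma has_period_border v t r : v ++ t = t ++ r -> has_period (v ++ t) (size v).
Proof.
move=> border i; rewrite size_cat => lt_i.
rewrite {1}border [LHS]nth_cat ifT; last lia.
by rewrite nth_cat ltnNge leq_addl addnK.
Qed.

Lemma flatten_nseqSr m v : flatten (nseq m.+1 v) = flatten (nseq m v) ++ v.
Proof. by rewrite -addn1 nseqD flatten_cat /= cats0. Qed.

Lemma size_flatten_nseq m v : size (flatten (nseq m v)) = m * size v.
Proof. by elim: m => //= m IH; rewrite size_cat IH mulSn. Qed.

Lemma nth_flatten_nseq m v i : i < m * size v ->
  nth x0 (flatten (nseq m v)) i = nth x0 v (i %% size v).
Proof.
elim: m i => [|m IH] i; first by rewrite mul0n.
rewrite mulSn /= nth_cat => lt_i; have [lt_iv | le_vi] := ltnP; first by rewrite modn_small.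
by rewrite IH; [rewrite -{2}(subnK le_vi) modnDr | lia].
Qed.

Lemma size_fpow v p : v != [::] -> size (fpow v p) = p.
Proof.
move=> nz_v; rewrite size_take size_flatten_nseq; case: ltnP => // le_pv.
by apply/eqP; rewrite eqn_leq le_pv leq_pmulr // lt0n size_eq0.
Qed.

Lemma nth_fpow v p i : v != [::] -> i < p -> nth x0 (fpow v p) i = nth x0 v (i %% size v).
Proof.
move=> nz_v lt_ip; have v_gt0 : 0 < size v by rewrite lt0n size_eq0.
by rewrite nth_take // nth_flatten_nseq //; apply: leq_trans (leq_pmulr _ v_gt0).
Qed.

Lemma fpow_size u : fpow u (size u) = u.
Proof. by case: u => // y u; rewrite /fpow /= take_size_cat. Qed.

Lemma has_period_fpow v p : v != [::] -> has_period (fpow v p) (size v).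
Proof. by move=> nz_v i; rewrite size_fpow // => lt_i; rewrite !nth_fpow ?modnDr //; lia. Qed.

Lemma fpow_take_period u p : 0 < p -> p <= size u -> has_period u p ->
  fpow (take p u) (size u) = u.
Proof.
move=> p_gt0 le_pu per_u.
have size_take_p : size (take p u) = p by rewrite size_take_min; lia.
have nz_take : take p u != [::] by rewrite -size_eq0 size_take_p -lt0n.
apply: (@eq_from_nth _ x0); rewrite size_fpow // => i lt_i.
rewrite nth_fpow // size_take_p nth_take ?ltn_mod //.
apply: (has_period_mod per_u); rewrite ?modn_mod //.
exact: leq_trans (ltn_pmod _ _) le_pu.
Qed.

Lemma power_cat_period_eq z t n q : 0 < q -> q + size z <= n * size z ->
  size t = size z -> has_period (flatten (nseq n z) ++ t) q -> t = z.
Proof.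
set s := size z; set W := flatten (nseq n z) => q_gt0 le_qW size_t per_Wt.
have size_W : size W = n * s := size_flatten_nseq n z.
have s_gt0 : 0 < s by case: (posnP s) le_qW => [-> | //]; rewrite muln0; lia.
have per_Ws : has_period W s.
  by move=> i; rewrite size_W => lt_i; rewrite !nth_flatten_nseq ?modnDr //; lia.
have per_Wg : has_period W (gcdn q s).
  by apply: has_period_gcd (has_period_catl per_Wt) per_Ws; rewrite ?size_W.
(* Reading t back modulo q lands in z^n, where the period gcd q |z| lets us
   move to the position j of the first copy of z. *)
apply: (@eq_from_nth _ x0) => // j; rewrite size_t => lt_js.
have lt_r : (n * s + j) %% q < n * s by apply: leq_trans (ltn_pmod _ q_gt0) _; lia.
have -> : nth x0 t j = nth x0 (W ++ t) (n * s + j).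
  by rewrite nth_cat size_W ltnNge leq_addr addKn.
rewrite -(has_period_mod per_Wt (i := (n * s + j) %% q)) ?modn_mod //; last first.
- by rewrite size_cat size_W size_t; lia.
- by rewrite size_cat; lia.
rewrite nth_cat size_W lt_r (has_period_mod per_Wg (j := j)) ?size_W //.
- by rewrite nth_flatten_nseq ?modn_small //; lia.
- lia.
- rewrite (modn_dvdm _ (dvdn_gcdl q s)) -modnDml.
  by rewrite (eqP (dvdn_mull n (dvdn_gcdr q s))).
Qed.
End Periods.

Section Exponent.
Variable R : realType.
Local Open Scope ring_scope.
Local Open Scope classical_set_scope.

Local Notation exponents u := [set x : R | exists v r, is_frac_power u v r /\ x = ratr r].

Lemma ler_nat_ratio (m n p q : nat) : (0 < n)%N -> (0 < q)%N -> (m * q <= p * n)%N ->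
  m%:R / n%:R <= p%:R / q%:R :> R.
Proof.
move=> n_gt0 q_gt0 le_mqpn.
by rewrite ler_pdivrMr ?ltr0n // mulrAC ler_pdivlMr ?ltr0n // -!natrM ler_nat.
Qed.

Lemma ler_ratio_lim (m N : nat) (x : R) : (0 < N)%N ->
  (forall k, (m * (2 * k + 3))%:R / (N * (2 * k + 3) + 2)%:R <= x) -> m%:R / N%:R <= x.
Proof.
move=> N_gt0 approx; rewrite leNgt; apply/negP => /ltr_add_invr [k lt_xk].
(* The gap m/N - m s/(N s + 2) is 2m / (N (N s + 2)), below 1/(k+1) once s >= 2m(k+1). *)
have := approx (m * k.+1)%N; set s := (2 * _ + 3)%N => le_x.
have sum_eq : (m * s)%:R / (N * s + 2)%:R + k.+1%:R^-1
       = ((m * s * k.+1) + (N * s + 2))%:R / ((N * s + 2) * k.+1)%:R :> R.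
  by rewrite [in RHS]natrD !natrM; field; rewrite nat1r -natrM -natrD !pnatr_eq0 addn2.
have le_s : (2 * (m * k.+1) <= s)%N by rewrite leq_addr.
have le_Ns : (s <= N * s)%N by rewrite leq_pmull.
have : m%:R / N%:R <= ((m * s * k.+1) + (N * s + 2))%:R / ((N * s + 2) * k.+1)%:R :> R.
  by apply: ler_nat_ratio; rewrite ?muln_gt0 ?addn2 //; nia.
rewrite -sum_eq => le_sum; have : x + k.+1%:R^-1 < x + k.+1%:R^-1.
  by apply: lt_le_trans lt_xk (le_trans le_sum _); rewrite lerD2r.
by rewrite ltxx.
Qed.

Lemma exponents_fpow (T : eqType) (u v : seq T) : v != [::] -> fpow v (size u) = u ->
  exponents u ((size u)%:R / (size v)%:R).
Proof.
move=> nz_v fpow_u; exists v, ((size u)%:R / (size v)%:R).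
split; last by rewrite fmorph_div !rmorph_nat.
by split; [exact/eqP | exists (size u)].
Qed.

Lemma exponentsP (T : eqType) (u : seq T) x : exponents u x ->
  exists2 v, v != [::] & fpow v (size u) = u /\ x = (size u)%:R / (size v)%:R.
Proof.
move=> [v [_ [[/eqP nz_v [p [-> fpow_p]]] ->]]].
have size_u : size u = p by rewrite fpow_p size_fpow.
by exists v; rewrite // size_u fpow_p fmorph_div !rmorph_nat.
Qed.

Lemma exponents_ubound (T : eqType) (x0 : T) (u : seq T) q : (0 < q)%N ->
  (forall p, (0 < p)%N -> has_period x0 u p -> (q <= p)%N) ->
  ubound (exponents u) ((size u)%:R / q%:R).
Proof.
move=> q_gt0 min_q _ /exponentsP [v nz_v [fpow_u ->]].
have v_gt0 : (0 < size v)%N by rewrite lt0n size_eq0.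
apply: ler_nat_ratio => //; rewrite leq_mul2l min_q ?orbT //.
by have := has_period_fpow x0 (p := size u) nz_v; rewrite fpow_u.
Qed.

Lemma expo_ge_period (T : eqType) (x0 : T) (u : seq T) p : (0 < p)%N -> (p <= size u)%N ->
  has_period x0 u p -> (size u)%:R / p%:R <= expo R u.
Proof.
move=> p_gt0 le_pu per_u; apply: ub_le_sup.
  exists (size u)%:R; rewrite -[X in ubound _ X]divr1.
  exact: (@exponents_ubound T x0 u 1 isT (fun p p_gt0 _ => p_gt0)).
have size_take_p : size (take p u) = p by rewrite size_take_min; lia.
rewrite -[in X in _ / X]size_take_p; apply: exponents_fpow.
  by rewrite -size_eq0 size_take_p -lt0n.
exact: fpow_take_period p_gt0 le_pu per_u.
Qed.

Lemma expo_le_period (T : eqType) (x0 : T) (u : seq T) q : u != [::] -> (0 < q)%N ->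
  (forall p, (0 < p)%N -> has_period x0 u p -> (q <= p)%N) ->
  expo R u <= (size u)%:R / q%:R.
Proof.
move=> nz_u q_gt0 min_q; apply: ge_sup; last exact: exponents_ubound q_gt0 min_q.
by eexists; apply: exponents_fpow nz_u (fpow_size u).
Qed.

Lemma expo_power_conj_le (T : eqType) (x y : seq T) n : x ++ y != y ++ x -> (1 < n)%N ->
  expo R (flatten (nseq n (x ++ y)) ++ y ++ x) <= (n.+1)%:R / (n.-1)%:R.
Proof.
move=> ncomm_xy n_gt1; have nz_z : x ++ y != [::] by move: ncomm_xy; case: x; case: y.
set z := x ++ y in ncomm_xy nz_z *; set s := size z.
have [x0 _] : exists x0 : T, x0 \in z.
  by case: (z) nz_z => // x0 z' _; exists x0; rewrite inE eqxx.
have s_gt0 : (0 < s)%N by rewrite lt0n size_eq0.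
have N_gt0 : (0 < n.-1)%N by rewrite -subn1 subn_gt0.
have size_yx : size (y ++ x) = s by rewrite /s !size_cat addnC.
have size_ns : (n * s = n.-1 * s + s)%N by rewrite -mulSnr prednK //; lia.
set u := _ ++ _.
have size_u : size u = (n.+1 * s)%N by rewrite size_cat size_yx size_flatten_nseq mulSnr.
have nz_u : u != [::] by rewrite -size_eq0 size_u muln_eq0 negb_or -!lt0n s_gt0.
apply: le_trans (expo_le_period (x0 := x0) (q := (n.-1 * s)%N) nz_u _ _) _.
- by rewrite muln_gt0 s_gt0 N_gt0.
- move=> p p_gt0 per_p; rewrite leqNgt; apply: contraNN ncomm_xy => lt_p.
  by rewrite (power_cat_period_eq p_gt0 _ size_yx per_p) // -/s size_ns leq_add2r ltnW.
- by apply: ler_nat_ratio; rewrite ?muln_gt0 ?s_gt0 ?N_gt0 // size_u mulnAC mulnA.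
Qed.

Lemma expo_power_conj_ge (T : eqType) (x y t : seq T) n : x ++ y = t ++ x -> y != [::] ->
  (1 < n)%N -> (n.+1 * size (x ++ y))%:R / (n.-1 * size (x ++ y) + size y)%:R
               <= expo R (flatten (nseq n (x ++ y)) ++ y ++ x).
Proof.
case: n => [|[|m]] // conj_xy nz_y _.
have [x0 _] : exists x0 : T, x0 \in y.
  by case: (y) nz_y => // x0 y' _; exists x0; rewrite inE eqxx.
set z := x ++ y in conj_xy *; set s := size z.
have size_ty : size t = size y by move/(congr1 size): conj_xy; rewrite !size_cat; lia.
(* u = v (zx) with v = z^(n-1) t, and zx is also a prefix of u. *)
set v := flatten (nseq m.+1 z) ++ t.
have size_v : size v = (m.+1 * s + size y)%N by rewrite size_cat size_flatten_nseq size_ty.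
have u_border : flatten (nseq m.+2 z) ++ y ++ x = v ++ z ++ x.
  by rewrite flatten_nseqSr -catA [in z ++ _]conj_xy /v /z -!catA.
have u_cat : v ++ z ++ x = (z ++ x) ++ y ++ flatten (nseq m z) ++ y ++ x.
  by rewrite -u_border /= /z -!catA.
have per_v := has_period_border x0 u_cat; rewrite -u_border in per_v.
have size_yx : size (y ++ x) = s by rewrite /s /z !size_cat addnC.
have size_u : size (flatten (nseq m.+2 z) ++ y ++ x) = (m.+3 * s)%N.
  by rewrite size_cat size_flatten_nseq size_yx -mulSnr.
rewrite -size_u -size_v; apply: expo_ge_period per_v; rewrite size_v ?size_u.
  by rewrite addn_gt0 [(0 < size y)%N]lt0n size_eq0 nz_y orbT.
have : (size y <= s)%N by rewrite /s /z size_cat leq_addl.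
rewrite !mulSn; lia.
Qed.

End Exponent.

Section Morphisms.
Variables (S G : eqType) (h : seq S -> seq G).
Hypothesis h_morph : is_morphism h.

Lemma morph_nil : h [::] = [::].
Proof.
apply/eqP; rewrite -size_eq0; have := congr1 size (h_morph [::] [::]).
by rewrite size_cat /=; lia.
Qed.

Lemma morph_flatten_nseq n w : h (flatten (nseq n w)) = flatten (nseq n (h w)).
Proof. by elim: n => [|n IH] /=; rewrite ?morph_nil // h_morph IH. Qed.

Lemma morph_power_conj a b n : h (flatten (nseq n [:: a; b]) ++ [:: b; a]) =
  flatten (nseq n (h [:: a] ++ h [:: b])) ++ h [:: b] ++ h [:: a].
Proof. by rewrite h_morph morph_flatten_nseq -!h_morph. Qed.

Lemma inj_morph_noncomm a b : injective h -> a != b ->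
  h [:: a] ++ h [:: b] != h [:: b] ++ h [:: a].
Proof. by move=> inj_h; apply: contraNneq; rewrite -!h_morph => /inj_h [->]. Qed.

End Morphisms.

Lemma cat_prefix_total (T : eqType) (s1 s2 t1 t2 : seq T) :
  s1 ++ t1 = s2 ++ t2 -> prefix s1 s2 || prefix s2 s1.
Proof. by elim: s1 s2 => [|x s1 IH] [|y s2] //= [-> /IH]; rewrite eqxx. Qed.

Section PrefixCode.
Variables (S G : eqType) (code : S -> seq G).
Hypotheses (code_neq_nil : forall z, code z != [::])
           (code_prefix_free : forall z z', prefix (code z) (code z') -> z = z').

Lemma flatten_map_morph : is_morphism (fun u => flatten (map code u)).
Proof. by move=> u v; rewrite map_cat flatten_cat. Qed.

Lemma prefix_code_inj : injective (fun u => flatten (map code u)).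
Proof.
have cat_neq_nil z u : code z ++ u != [::].
  by rewrite -size_eq0 size_cat addn_eq0 size_eq0 negb_and code_neq_nil.
elim=> [|z1 u1 IH] [|z2 u2] //=; first by move/esym/eqP; rewrite (negbTE (cat_neq_nil _ _)).
  by move/eqP; rewrite (negbTE (cat_neq_nil _ _)).
move=> eq_cat; have eq_z : z1 = z2.
  by case/orP: (cat_prefix_total eq_cat) => /code_prefix_free.
by move: eq_cat; rewrite eq_z => /eqP; rewrite eqseq_cat // eqxx => /eqP /IH ->.
Qed.

End PrefixCode.

Section PowerCode.
Variables (S G : finType) (a b : S) (c d : G).
Hypotheses (neq_ab : a != b) (neq_cd : c != d).

Definition power_code k z : seq G :=
  if z == a then c :: flatten (nseq k [:: d; c])
  else if z == b then [:: d; c]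
  else [:: d, d & rcons (nseq (enum_rank z) c) d].

Lemma prefix_rcons_nseq i j : prefix (rcons (nseq i c) d) (rcons (nseq j c) d) -> i = j.
Proof.
elim: i j => [|i IH] [|j] //=; rewrite ?(negbTE neq_cd) 1?eq_sym ?(negbTE neq_cd) //.
by rewrite eqxx => /IH ->.
Qed.

Lemma power_code_prefix_free k z z' : prefix (power_code k z) (power_code k z') -> z = z'.
Proof.
rewrite /power_code; do ![case: eqP => [->|]] => //=;
  rewrite ?eqxx ?(eq_sym d c) ?(negbTE neq_cd) //=.
by move=> _ _ _ _ /prefix_rcons_nseq /val_inj /enum_rank_inj.
Qed.

Lemma power_code_neq_nil k z : power_code k z != [::].
Proof. by rewrite /power_code; do !case: ifP. Qed.

Definition power_morph k (u : seq S) : seq G := flatten (map (power_code k) u).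

Lemma power_morph_morph k : is_morphism (power_morph k).
Proof. exact: flatten_map_morph. Qed.

Lemma power_morph_inj k : injective (power_morph k).
Proof. exact/prefix_code_inj/power_code_prefix_free/power_code_neq_nil. Qed.

Lemma power_morph_a k : power_morph k [:: a] = c :: flatten (nseq k [:: d; c]).
Proof. by rewrite /power_morph /= cats0 /power_code eqxx. Qed.

Lemma power_morph_b k : power_morph k [:: b] = [:: d; c].
Proof. by rewrite /power_morph /= /power_code eq_sym (negbTE neq_ab) eqxx. Qed.

Lemma expo_power_morph_ge (R : realType) k n : (1 < n)%N ->
  ((n.+1 * (2 * k + 3))%N%:R / (n.-1 * (2 * k + 3) + 2)%N%:R
   <= expo R (power_morph k (flatten (nseq n [:: a; b]) ++ [:: b; a])))%R.
Proof.
move=> n_gt1; rewrite (morph_power_conj (power_morph_morph k)) power_morph_a power_morph_b.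
have size_xy : size ((c :: flatten (nseq k [:: d; c])) ++ [:: d; c]) = (2 * k + 3)%N.
  by rewrite size_cat /= size_flatten_nseq /=; lia.
rewrite -size_xy; apply: (@expo_power_conj_ge R _ _ _ [:: c; d]) => //=.
by rewrite -flatten_nseqSr.
Qed.

End PowerCode.

Local Open Scope ring_scope.

Lemma expo_inj_morph_le (R : realType) (S G : eqType) (h : seq S -> seq G) a b n :
  is_morphism h -> injective h -> a != b -> (1 < n)%N ->
  expo R (h (flatten (nseq n [:: a; b]) ++ [:: b; a])) <= n.+1%:R / n.-1%:R.
Proof.
move=> h_morph inj_h neq_ab n_gt1; rewrite morph_power_conj //.
exact: expo_power_conj_le (inj_morph_noncomm h_morph inj_h neq_ab) n_gt1.
Qed.

Theorem theorem8 (R : realType) (Sigma Gamma : finType)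
  (hS : (2 <= #|Sigma|)%N) (hG : (2 <= #|Gamma|)%N)
  (a b : Sigma) (hab : a != b) (n : nat) (hn : (2 <= n)%N) :
  expo_inj R Gamma (flatten (nseq n [:: a; b]) ++ [:: b; a])
  = 1 + 2 / (n.-1)%:R.
Proof.
(* [hS] is implied by [hab] and not needed. *)
have /card_gt1P [c [d [_ _ neq_cd]]] := hG.
rewrite /expo_inj; set w := _ ++ _; set E := (X in sup X).
have ub_E : ubound E (n.+1%:R / n.-1%:R).
  by move=> _ [h [h_morph [inj_h ->]]]; exact: expo_inj_morph_le.
have E_power k : E (expo R (power_morph a b c d k w)).
  exists (power_morph a b c d k).
  by split; [exact: power_morph_morph | split; first exact: power_morph_inj].
have N_gt0 : (0 < n.-1)%N by rewrite -subn1 subn_gt0.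
have -> : 1 + 2 / (n.-1)%:R = n.+1%:R / n.-1%:R :> R.
  have -> : n.+1 = (n.-1 + 2)%N by lia.
  by rewrite natrD [RHS]mulrDl divff // pnatr_eq0 -lt0n.
apply/eqP; rewrite eq_le ge_sup //=; last by eexists; exact: E_power 0%N.
apply: ler_ratio_lim N_gt0 _ => k.
exact: le_trans (expo_power_morph_ge hab neq_cd R k hn)
                (ub_le_sup (ex_intro _ _ ub_E) (E_power k)).
Qed.
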